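(* Let $(E,\tau)$ be a uniquely generated violator space. Then each equivalence class of the relation $X\sim Y\iff\tau(X)=\tau(Y)$ on $2^E$ is closed under intersection and under union: if $\tau(X)=\tau(Y)$ then $\tau(X\cap Y)=\tau(X\cup Y)=\tau(X)$.
   Context: $E$ is a finite set and $\tau:2^E\to 2^E$. $(E,\tau)$ is a violator space if (C1) $Z\subseteq\tau(Z)$ for all $Z\subseteq E$, and (C22) for all $F,G\subseteq E$, $F\subseteq G\subseteq\tau(F)$ implies $\tau(G)=\tau(F)$. For $X\subseteq E$, a generator of $X$ is any $B\subseteq E$ with $\tau(B)=\tau(X)$; a basis of $X$ is an inclusion-minimal generator of $X$. The space is uniquely generated if every $X\subseteq E$ has exactly one basis. *)

From mathcomp Require Import all_boot.
Set Implicit Arguments. Unset Strict Implicit. Unset Printing Implicit Defensive.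

Definition violator_space (E : finType) (tau : {set E} -> {set E}) : Prop :=
  (forall Z : {set E}, Z \subset tau Z) /\
  (forall F G : {set E}, F \subset G -> G \subset tau F -> tau G = tau F).

Definition is_generator (E : finType) (tau : {set E} -> {set E}) (X B : {set E}) : Prop :=
  tau B = tau X.

Definition is_basis (E : finType) (tau : {set E} -> {set E}) (X B : {set E}) : Prop :=
  is_generator tau X B /\
  (forall B' : {set E}, B' \proper B -> ~ is_generator tau X B').

Definition uniquely_generated (E : finType) (tau : {set E} -> {set E}) : Prop :=
  forall X : {set E}, exists! B : {set E}, is_basis tau X B.

(* Every generator of X contains a basis of X. If tau X = tau Y, then X and
   Y have the same bases, so the unique basis B lies in X :&: Y. Both X :&: Y
   and X :|: Y are then squeezed between B and tau B = tau X, and (C22) gives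
   them the same closure as B. *)

From mathcomp Require Import all_boot.

Set Implicit Arguments.
Unset Strict Implicit.

Section UniquelyGeneratedViolatorSpace.

Variables (E : finType) (tau : {set E} -> {set E}).

Lemma is_basis_closure_eq (X Y B : {set E}) :
  tau X = tau Y -> is_basis tau X B -> is_basis tau Y B.
Proof. by rewrite /is_basis /is_generator => ->. Qed.

Lemma basis_sub_generator (X G : {set E}) :
  is_generator tau X G -> exists2 B : {set E}, B \subset G & is_basis tau X B.
Proof.
move=> genG.
have [B minB sBG] := @minset_exists _ [pred B | tau B == tau X] G (introT eqP genG).
exists B => //; case/minsetP: minB => /eqP genB minB; split=> // B' sB'B genB'.
have eqB'B := minB B' (introT eqP genB') (proper_sub sB'B).
by move: sB'B; rewrite eqB'B properxx.
Qed.

Hypothesis tau_violator : violator_space tau.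

Lemma closure_sandwich (B Z : {set E}) :
  B \subset Z -> Z \subset tau B -> tau Z = tau B.
Proof. by case: tau_violator => _; apply. Qed.

Hypothesis tau_unique : uniquely_generated tau.

Lemma basis_sub_setI (X Y : {set E}) :
  tau X = tau Y -> exists2 B : {set E}, B \subset X :&: Y & tau B = tau X.
Proof.
move=> eqXY.
have [B sBX basB] := basis_sub_generator (erefl (tau X)).
have [B' sB'Y basB'] := basis_sub_generator (erefl (tau Y)).
have [B0 [_ uniqB0]] := tau_unique X.
have eqB'B : B' = B.
  by rewrite -(uniqB0 _ basB) -(uniqB0 _ (is_basis_closure_eq (esym eqXY) basB')).
by exists B; [rewrite subsetI sBX -eqB'B | case: basB].
Qed.

End UniquelyGeneratedViolatorSpace.

Theorem mainTheorem17 (E : finType) (tau : {set E} -> {set E}) :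
  violator_space tau -> uniquely_generated tau ->
  forall X Y : {set E}, tau X = tau Y ->
    tau (X :&: Y) = tau X /\ tau (X :|: Y) = tau X.
Proof.
move=> viol uniq X Y eqXY.
have [B sBXY eqBX] := basis_sub_setI uniq eqXY.
have [sub_tau _] := viol.
rewrite -eqBX; split; apply: (closure_sandwich viol).
- exact: sBXY.
- by rewrite eqBX; apply: subset_trans (subsetIl X Y) (sub_tau X).
- by apply: subset_trans sBXY _; apply: subset_trans (subsetIl X Y) (subsetUl X Y).
- by rewrite eqBX subUset sub_tau eqXY sub_tau.
Qed.
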